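(* Let $G=(V,E)$ be a finite simple graph of order $n$ and let $T=n-1$. If $(x,y,z)$ is an optimal solution of the integer program with the constraints of the Time Step Model $\mathrm{TSM}(G,T)$ and objective ''minimize $\sum_{v\in V}x^0_v-\frac{1}{2T}\sum_{t\in[T]}z^t$'', then $C=\{v\in V\colon x^0_v=1\}$ is a minimum zero forcing set of $G$ with $\mathrm{PT}(G)=\mathrm{pt}(G,C)=\sum_{t\in[T]}z^t$.
   Context: Zero forcing: under the standard color change rule a filled vertex $u$ can force a non-filled vertex $v$ if $v$ is the only non-filled neighbor of $u$; $C\subseteq V$ is a zero forcing set if, starting with $C$ filled and repeatedly forcing, all of $V$ becomes filled; a minimum zero forcing set is one of minimum size. The propagation time $\mathrm{pt}(G,C)$ is the smallest $t^*$ such that, starting from $C^{[0]}=C$ and setting $C^{[t]}=C^{[t-1]}\cup\{v\notin C^{[t-1]}\colon$ some $u\in C^{[t-1]}$ has $v$ as its only neighbor outside $C^{[t-1]}\}$, one has $C^{[t^*]}=V$ ($\infty$ if $C$ is not a zero forcing set). $\mathrm{PT}(G)=\max\{\mathrm{pt}(G,C)\colon C$ a minimum zero forcing set$\}$. $N(u)$ is the neighborhood of $u$ and $d(u)=|N(u)|$. Time Step Model constraints: $A$ is the set of arcs containing $(u,v)$ and $(v,u)$ for each edge $\{u,v\}$, $[T]=\{1,\dots,T\}$. Binary variables $x^t_v$ ($v\in V$, $t\in\{0,\dots,T\}$), $y^t_a$ ($a\in A$, $t\in[T]$), $z^t$ ($t\in[T]$), with constraints: (1) $x^0_v+\sum_{t\in[T]}\sum_{a=(u,v)\in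 A}y^t_a=1$ for all $v$; (2) $y^t_a\leq x^{t-1}_u$ for all $a=(u,v)\in A$, $t\in[T]$; (3) $y^t_a\leq x^{t-1}_w$ for all $a=(u,v)\in A$, $w\in N(u)\setminus\{v\}$, $t\in[T]$; (4) $x^t_v=x^{t-1}_v+\sum_{a=(u,v)\in A}y^t_a$ for all $v$, $t\in[T]$; (5) $x^{t-1}_u-x^{t-1}_v+\sum_{w\in N(u)\setminus\{v\}}x^{t-1}_w\leq\sum_{a=(w,v)\in A}y^t_a+d(u)-1$ for all $(u,v)\in A$, $t\in[T]$; (6) $\frac1n\sum_{v\in V}(x^t_v-x^{t-1}_v)-z^t\leq0$ for all $t\in[T]$; (7) $z^t-\sum_{v\in V}(x^t_v-x^{t-1}_v)\leq 0$ for all $t\in[T]$. *)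

From mathcomp Require Import all_boot all_order all_algebra.
Set Implicit Arguments. Unset Strict Implicit. Unset Printing Implicit Defensive.
Import Order.TTheory GRing.Theory Num.Theory.

Definition simple_graph (V : finType) (adj : rel V) : Prop :=
  symmetric adj /\ irreflexive adj.

Section ZF.
Variables (V : finType) (adj : rel V).

Definition nbhd (u : V) : {set V} := [set w | adj u w].

Fixpoint valid_forcing (S : {set V}) (s : seq (V * V)) : bool :=
  match s with
  | [::] => S == setT
  | (u, v) :: s' =>
      [&& u \in S, v \notin S, nbhd u :\: S == [set v]
        & valid_forcing (v |: S) s']
  end.

Definition zero_forcing_set (C : {set V}) : Prop :=
  exists s : seq (V * V), valid_forcing C s.

Definition min_zero_forcing_set (C : {set V}) : Prop :=
  zero_forcing_set C /\ forall C', zero_forcing_set C' -> #|C| <= #|C'|.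

Definition prop_step (S : {set V}) : {set V} :=
  S :|: [set v | (v \notin S) && [exists u in S, nbhd u :\: S == [set v]]].

(* pt(G,C) = t  (finite value; pt = oo means no such t exists) *)
Definition pt_is (C : {set V}) (t : nat) : Prop :=
  iter t prop_step C = setT /\
  forall t', iter t' prop_step C = setT -> t <= t'.

Definition PT_is (t : nat) : Prop :=
  (exists C, min_zero_forcing_set C /\ pt_is C t) /\
  (forall C, min_zero_forcing_set C -> forall t', pt_is C t' -> t' <= t).

End ZF.

Local Open Scope ring_scope.

Definition b2q (b : bool) : rat := (nat_of_bool b)%:R.

Section TSM.
Variables (V : finType) (adj : rel V).

(* Variables: x t v  (t = 0..T),  y t u v for the arc (u,v) (used only when
   adj u v, t = 1..T),  z t  (t = 1..T).  Binary variables are booleans. *)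
Definition TSM_feasible (T : nat) (x : nat -> V -> bool)
    (y : nat -> V -> V -> bool) (z : nat -> bool) : Prop :=
  (* (1) *)
  (forall v, b2q (x 0%N v)
      + \sum_(1 <= t < T.+1) \sum_(u | adj u v) b2q (y t u v) = 1) /\
  (* (2) *)
  (forall t, (1 <= t <= T)%N -> forall u v, adj u v ->
      b2q (y t u v) <= b2q (x t.-1 u)) /\
  (* (3) *)
  (forall t, (1 <= t <= T)%N -> forall u v, adj u v ->
      forall w, w \in nbhd adj u :\ v -> b2q (y t u v) <= b2q (x t.-1 w)) /\
  (* (4) *)
  (forall t, (1 <= t <= T)%N -> forall v,
      b2q (x t v) = b2q (x t.-1 v) + \sum_(u | adj u v) b2q (y t u v)) /\
  (* (5) *)
  (forall t, (1 <= t <= T)%N -> forall u v, adj u v ->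
      b2q (x t.-1 u) - b2q (x t.-1 v)
        + \sum_(w in nbhd adj u :\ v) b2q (x t.-1 w)
      <= \sum_(w | adj w v) b2q (y t w v) + (#|nbhd adj u|)%:R - 1) /\
  (* (6) *)
  (forall t, (1 <= t <= T)%N ->
      (#|V|%:R)^-1 * \sum_(v : V) (b2q (x t v) - b2q (x t.-1 v)) - b2q (z t)
      <= 0) /\
  (* (7) *)
  (forall t, (1 <= t <= T)%N ->
      b2q (z t) - \sum_(v : V) (b2q (x t v) - b2q (x t.-1 v)) <= 0).

Definition TSM_objective (T : nat) (x : nat -> V -> bool) (z : nat -> bool)
    : rat :=
  \sum_(v : V) b2q (x 0%N v) - (2 * T%:R)^-1 * \sum_(1 <= t < T.+1) b2q (z t).

Definition TSM_optimal (T : nat) x y z : Prop :=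
  TSM_feasible T x y z /\
  forall x' y' z', TSM_feasible T x' y' z' ->
    TSM_objective T x z <= TSM_objective T x' z'.

End TSM.

(* A feasible solution of TSM(G,T) is a record of the simultaneous propagation
   started from C = {v | x^0_v = 1}: constraints (2)-(5) force x^t to be C^[t],
   (1) forces x^T = V, and (6)-(7) force z^t to indicate C^[t] <> C^[t-1], so
   that sum_t z^t = pt(G,C). Conversely, the propagation of any S that fills V
   within T steps, with one chosen forcer per newly filled vertex, is feasible.
   A zero forcing set fills V within n - 1 steps, since every step fills a new
   vertex. Finally sum_t z^t / (2T) <= 1/2, so the objective orders solutions
   lexicographically, first by |C| and then by -pt(G,C). *)

From mathcomp Require Import all_boot all_order all_algebra.
From mathcomp Require Import lra zify.
Set Implicit Arguments. Unset Strict Implicit. Unset Printing Implicit Defensive.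
Import Order.TTheory GRing.Theory Num.Theory.

Lemma set_mem_id (T : finType) (A : {set T}) : [set x | x \in A] = A.
Proof. by apply/setP => x; rewrite inE. Qed.

Section Propagation.
Variables (V : finType) (adj : rel V).
Local Notation ps := (prop_step adj).

Definition forces (S : {set V}) (u v : V) : bool := nbhd adj u :\: S == [set v].

Lemma forcesE (S : {set V}) u v :
  forces S u v = [&& adj u v, v \notin S & nbhd adj u :\ v \subset S].
Proof.
apply/eqP/and3P => [f | [uv vS sub]].
  have : v \in nbhd adj u :\: S by rewrite f set11.
  rewrite !inE => /andP[vS uv]; split=> //; apply/subsetP => w.
  rewrite !inE => /andP[wv uw]; apply: contraR wv => wS.
  by rewrite -in_set1 -f !inE wS.
apply/setP => w; rewrite !inE; have [-> | wv] := eqVneq w v; first by rewrite vS.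
by apply/andP => -[/negP wS uw]; apply: wS; rewrite (subsetP sub) // !inE wv.
Qed.

Lemma forces_subset (S S' : {set V}) u v :
  S \subset S' -> v \notin S' -> forces S u v -> forces S' u v.
Proof.
by move=> sub vS'; rewrite !forcesE => /and3P[-> _ h]; rewrite vS' (subset_trans h sub).
Qed.

Lemma prop_stepP (S : {set V}) v :
  reflect (v \in S \/ exists2 u, u \in S & forces S u v) (v \in ps S).
Proof.
rewrite /prop_step !inE; apply: (iffP idP).
  by case/orP => [|/andP[_ /exists_inP]]; [left | right].
case=> [-> // | [u uS f]]; apply/orP; right.
by move: (f); rewrite forcesE => /and3P[_ -> _]; apply/exists_inP; exists u.
Qed.

Lemma subset_prop_step (S : {set V}) : S \subset ps S.
Proof. by apply/subsetP => v vS; apply/prop_stepP; left. Qed.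

Lemma prop_step_forced (S : {set V}) u v : u \in S -> forces S u v -> v \in ps S.
Proof. by move=> uS f; apply/prop_stepP; right; exists u. Qed.

Lemma prop_step_mono (S S' : {set V}) : S \subset S' -> ps S \subset ps S'.
Proof.
move=> sub; apply/subsetP => v /prop_stepP[vS | [u uS f]].
  exact/(subsetP (subset_prop_step S'))/(subsetP sub).
have [vS' | vS'] := boolP (v \in S'); first exact: subsetP (subset_prop_step S') v vS'.
exact: prop_step_forced (subsetP sub u uS) (forces_subset sub vS' f).
Qed.

Lemma prop_step_set0 : ps set0 = set0.
Proof. by apply/eqP; rewrite -subset0; apply/subsetP => v /prop_stepP[|[u]]; rewrite inE. Qed.

Lemma iter_prop_step_mono k (S S' : {set V}) :
  S \subset S' -> iter k ps S \subset iter k ps S'.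
Proof. by elim: k => //= k IH sub; apply/prop_step_mono/IH. Qed.

Lemma iter_prop_step_le i j (S : {set V}) :
  i <= j -> iter i ps S \subset iter j ps S.
Proof.
move/subnK <-; elim: (j - i) => //= k IH.
exact: subset_trans IH (subset_prop_step _).
Qed.

Lemma iter_prop_step_fixed k j (S : {set V}) :
  iter k.+1 ps S = iter k ps S -> k <= j -> iter j ps S = iter k ps S.
Proof. by move=> fix_k /subnK <-; elim: (j - k) => //= i ->. Qed.

Lemma valid_forcing_iter (S : {set V}) s :
  valid_forcing adj S s -> iter (size s) ps S = setT.
Proof.
elim: s S => [|[u v] s IH] S /=; first by move/eqP.
case/and4P => uS _ f /IH allT; apply/eqP; rewrite eqEsubset subsetT -allT -iterS iterSr.
by apply: iter_prop_step_mono; rewrite subUset sub1set (prop_step_forced uS f) subset_prop_step.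
Qed.

Lemma zero_forcing_set_cons (S : {set V}) u v :
  u \in S -> forces S u v -> zero_forcing_set adj (v |: S) -> zero_forcing_set adj S.
Proof.
move=> uS f [s forcing]; exists ((u, v) :: s).
by move: (f); rewrite /= forcesE uS forcing => /and3P[_ -> _]; rewrite andbT.
Qed.

Lemma zero_forcing_set_prop_step (S : {set V}) :
  zero_forcing_set adj (ps S) -> zero_forcing_set adj S.
Proof.
move=> zf_ps; suff ind n S' : #|ps S :\: S'| = n -> S \subset S' -> S' \subset ps S ->
    zero_forcing_set adj S'.
  exact: ind _ _ erefl (subxx S) (subset_prop_step S).
(* Simultaneous forces can be serialised: a force from S stays valid from any
   larger S' that misses its target. *)
elim: n S' => [|n IH] S' card_n sS sS'.
  suff -> : S' = ps S by [].
  by apply/eqP; rewrite eqEsubset sS' -setD_eq0 -cards_eq0 card_n.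
have /card_gt0P[v] : 0 < #|ps S :\: S'| by rewrite card_n.
rewrite in_setD => /andP[vS' vps].
have [u uS f] : exists2 u, u \in S & forces S u v.
  by case/prop_stepP: vps => // vS; rewrite (subsetP sS v vS) in vS'.
apply: (zero_forcing_set_cons (subsetP sS u uS) (forces_subset sS vS' f)); apply: IH.
- by apply/eqP; move: card_n; rewrite (cardsD1 v) in_setD vps vS' setDDl setUC add1n => -[->].
- by apply: subset_trans sS _; apply: subsetUr.
- by rewrite subUset sub1set vps.
Qed.

Lemma zero_forcing_set_iter k (S : {set V}) : iter k ps S = setT -> zero_forcing_set adj S.
Proof.
elim: k S => [|k IH] S /=; first by move=> ->; exists [::]; apply: eqxx.
by rewrite -iterS iterSr => /IH /zero_forcing_set_prop_step.
Qed.

Lemma pt_is_exists N (S : {set V}) :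
  iter N ps S = setT -> exists2 m, pt_is adj S m & m <= N.
Proof.
move=> allT; have ex : exists k, iter k ps S == setT by exists N; rewrite allT.
case: (ex_minnP ex) => m /eqP allT_m min_m; exists m; last by rewrite min_m ?allT.
by split=> // t /eqP; apply: min_m.
Qed.

Lemma pt_is_uniq (S : {set V}) m m' : pt_is adj S m -> pt_is adj S m' -> m = m'.
Proof. by move=> [allT min] [allT' min']; apply/eqP; rewrite eqn_leq min ?min'. Qed.

Lemma pt_is_iter (S : {set V}) m t : pt_is adj S m -> (iter t ps S == setT) = (m <= t).
Proof.
case=> allT min; apply/eqP/idP => [/min // | le_mt].
by apply/eqP; rewrite eqEsubset subsetT -allT iter_prop_step_le.
Qed.

Lemma pt_is_step (S : {set V}) m t :
  pt_is adj S m -> (iter t.+1 ps S != iter t ps S) = (t < m).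
Proof.
move=> pt_m; have [lt_tm | le_mt] := ltnP t m.
  apply/eqP => fix_t; have /eqP := iter_prop_step_fixed fix_t (ltnW lt_tm).
  by rewrite pt_m.1 eq_sym (pt_is_iter _ pt_m) leqNgt lt_tm.
have /eqP -> : iter t.+1 ps S == setT by rewrite (pt_is_iter _ pt_m) (leqW le_mt).
have /eqP -> : iter t ps S == setT by rewrite (pt_is_iter _ pt_m).
by rewrite eqxx.
Qed.

Lemma card_iter_pt (S : {set V}) m : pt_is adj S m -> #|S| + m <= #|iter m ps S|.
Proof.
move=> pt_m; suff : forall k, k <= m -> #|S| + k <= #|iter k ps S| by apply.
elim=> [|k IH] lt_km; first by rewrite addn0.
rewrite addnS; apply: leq_ltn_trans (IH (ltnW lt_km)) (proper_card _).
by rewrite properEneq eq_sym (pt_is_step _ pt_m) lt_km subset_prop_step.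
Qed.

Lemma pt_is_le_card (S : {set V}) m : pt_is adj S m -> m <= #|V|.-1.
Proof.
move=> pt_m; have [S0 | /set0Pn[u uS]] := eqVneq S set0.
  have stuck : iter m ps set0 = set0.
    exact: (iter_prop_step_fixed (k := 0) prop_step_set0 (leq0n m)).
  by move: (pt_is_iter 0 pt_m); rewrite /= -pt_m.1 S0 stuck eqxx leqn0 => /esym/eqP ->.
have := card_iter_pt pt_m; have := subset_leq_card (subsetT (iter m ps S)); rewrite cardsT.
have : 0 < #|S| by apply/card_gt0P; exists u.
lia.
Qed.

Lemma zero_forcing_setP (S : {set V}) :
  zero_forcing_set adj S <-> iter #|V|.-1 ps S = setT.
Proof.
split; last exact: zero_forcing_set_iter.
case=> s /valid_forcing_iter /pt_is_exists[m pt_m _].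
by apply/eqP; rewrite (pt_is_iter _ pt_m) (pt_is_le_card pt_m).
Qed.

Definition active_steps N (S : {set V}) : nat :=
  \sum_(1 <= t < N.+1) (iter t ps S != iter t.-1 ps S).

Lemma active_steps_pt N (S : {set V}) m :
  pt_is adj S m -> m <= N -> active_steps N S = m.
Proof.
move=> pt_m le_mN; rewrite /active_steps big_add1 /=.
under eq_bigr do rewrite (pt_is_step _ pt_m).
rewrite (big_cat_nat (leq0n m) le_mN) /=.
have -> : \sum_(0 <= t < m) (t < m) = m.
  by rewrite (eq_big_nat _ _ (F2 := fun=> 1)) ?sum_nat_const_nat ?muln1 ?subn0 // => t /andP[_ ->].
have -> : \sum_(m <= t < N) (t < m) = 0.
  by rewrite big_nat big1 // => t /andP[le_mt _]; rewrite ltnNge le_mt.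
exact: addn0.
Qed.

End Propagation.

Local Open Scope ring_scope.

Lemma b2q_sum (I : Type) (r : seq I) (P : pred I) (F : I -> bool) :
  \sum_(i <- r | P i) b2q (F i) = (\sum_(i <- r | P i) F i)%N%:R.
Proof. by rewrite natr_sum. Qed.

Lemma b2q_addE (a b : bool) (n : nat) : b2q a = b2q b + n%:R <-> (a = b + n :> nat)%N.
Proof. by rewrite /b2q -natrD; split=> [e | -> //]; apply/eqP; rewrite -(eqr_nat rat) e. Qed.

Lemma indicator_bounds (n k : nat) (b : bool) : (k <= n)%N ->
  (n%:R^-1 * k%:R - b2q b <= 0 /\ b2q b - k%:R <= 0 :> rat) <-> b = (k != 0)%N.
Proof.
case: k => [|k] le_kn.
  by case: b; rewrite /b2q /= mulr0; split=> // -[_ ]; rewrite subr0 ler10.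
have n_gt0 : 0 < n%:R :> rat by rewrite ltr0n (leq_trans _ le_kn).
have ratio_gt0 : 0 < n%:R^-1 * k.+1%:R :> rat by rewrite mulr_gt0 ?invr_gt0.
have ratio_le1 : n%:R^-1 * k.+1%:R <= 1 :> rat by rewrite mulrC ler_pdivrMr // mul1r ler_nat.
have k_ge1 : 1 <= k.+1%:R :> rat by rewrite ler1n.
by case: b; rewrite /b2q /=; split=> //; lra.
Qed.

(* Constraint (5), with #|N(u)| written as 1 + #|N(u) :\ v|. *)
Lemma forcing_count_le (bu bv c : bool) (j k : nat) : (j <= k)%N ->
  (bu -> ~~ bv -> j = k -> c) -> b2q bu - b2q bv + j%:R <= b2q c + (1 + k)%:R - 1.
Proof.
move=> le_jk imp; have : (bu + j <= bv + c + k)%N by case: bu bv c imp => [] [] [] /= imp; lia.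
by rewrite -(ler_nat rat) !natrD /b2q; lra.
Qed.

(* The time term p / (2T) is at most 1/2, so it only breaks ties between
   equal c (when T = 0, both p and p' vanish and 0^-1 = 0). *)
Lemma objective_lex (T c c' p p' : nat) : (p <= T)%N -> (p' <= T)%N ->
  c%:R - (2 * T%:R)^-1 * p%:R <= c'%:R - (2 * T%:R)^-1 * p'%:R :> rat ->
  (c <= c')%N /\ (c = c' -> p' <= p)%N.
Proof.
move=> le_pT le_p'T; have [T0 | T_gt0] := posnP T.
  by move: le_pT le_p'T; rewrite T0 !leqn0 => /eqP-> /eqP->; rewrite !mulr0 !subr0 ler_nat.
set a := (2 * T%:R)^-1 => ineq.
have a_gt0 : 0 < a by rewrite invr_gt0 mulr_gt0 ?ltr0n.
have aT : a * T%:R = 2^-1 by rewrite /a invfM -mulrA mulVf ?mulr1 ?pnatr_eq0 -?lt0n.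
have ap : a * p%:R <= a * T%:R by rewrite ler_pM2l // ler_nat.
have ap' : 0 <= a * p'%:R by rewrite mulr_ge0 ?ler0n ?ltW.
split=> [|cc']; first by rewrite -ltnS -(ltr_nat rat) -addn1 natrD; lra.
by rewrite -(ler_nat rat) -(ler_pM2l a_gt0); move: ineq; rewrite cc'; lra.
Qed.

Section TimeStepModel.
Variables (V : finType) (adj : rel V).
Local Notation ps := (prop_step adj).

(* Constraints (2)-(7) at one time step t, for P = x^(t-1), Q = x^t, Y = y^t
   and Z = z^t. *)
Definition tsm_step (P Q : V -> bool) (Y : V -> V -> bool) (Z : bool) : Prop :=
  (forall u v, adj u v -> b2q (Y u v) <= b2q (P u)) /\
  (forall u v, adj u v -> forall w, w \in nbhd adj u :\ v -> b2q (Y u v) <= b2q (P w)) /\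
  (forall v, b2q (Q v) = b2q (P v) + \sum_(u | adj u v) b2q (Y u v)) /\
  (forall u v, adj u v ->
      b2q (P u) - b2q (P v) + \sum_(w in nbhd adj u :\ v) b2q (P w)
      <= \sum_(w | adj w v) b2q (Y w v) + (#|nbhd adj u|)%:R - 1) /\
  ((#|V|%:R)^-1 * \sum_(v : V) (b2q (Q v) - b2q (P v)) - b2q Z <= 0) /\
  (b2q Z - \sum_(v : V) (b2q (Q v) - b2q (P v)) <= 0).

Lemma arcs_telescope T (x : nat -> V -> bool) (y : nat -> V -> V -> bool) v :
  (forall t, (1 <= t <= T)%N ->
     b2q (x t v) = b2q (x t.-1 v) + \sum_(u | adj u v) b2q (y t u v)) ->
  b2q (x 0%N v) + \sum_(1 <= t < T.+1) \sum_(u | adj u v) b2q (y t u v) = b2q (x T v).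
Proof.
move=> arcs; rewrite big_add1 /= (telescope_sumr_eq (fun t => b2q (x t v))) //.
  by rewrite addrC subrK.
by move=> t /andP[_ lt_tT]; rewrite (arcs t.+1) ?lt_tT // addrC addKr.
Qed.

Lemma TSM_feasibleP T x y z :
  TSM_feasible adj T x y z <->
  (forall v, x T v) /\
  (forall t, (1 <= t <= T)%N -> tsm_step (x t.-1) (x t) (y t) (z t)).
Proof.
split=> [[h1 [h2 [h3 [h4 [h5 [h6 h7]]]]]] | [allT steps]].
  split=> [v | t tT].
    by have := h1 v; rewrite arcs_telescope => [/eqP | t /h4]; [rewrite pnatr_eq1 eqb1 |].
  exact: conj (h2 t tT) (conj (h3 t tT) (conj (h4 t tT)
    (conj (h5 t tT) (conj (h6 t tT) (h7 t tT))))).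
split=> [v | ]; first by rewrite arcs_telescope ?allT // => t /steps[_ [_ []]].
by do !split; move=> t /steps[? [? [? [? [? ?]]]]].
Qed.

Lemma sum_b2q_card (A P : pred V) :
  \sum_(v | A v) b2q (P v) = #|[set v | A v && P v]|%:R.
Proof.
rewrite b2q_sum (eq_bigr (fun v => if P v then 1%N else 0%N)) => [|v _]; last by case: (P v).
by rewrite -big_mkcondr sum1dep_card.
Qed.

Lemma sum_b2q_diff (P Q : V -> bool) : [set v | P v] \subset [set v | Q v] ->
  \sum_v (b2q (Q v) - b2q (P v)) = #|[set v | Q v] :\: [set v | P v]|%:R.
Proof.
move=> PQ; rewrite sumrB !sum_b2q_card /= cardsD (setIidPr PQ) natrB //.
exact: subset_leq_card.
Qed.

Lemma b2q_le (a b : bool) : (b2q a <= b2q b) = (a ==> b).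
Proof. by case: a b => [] []; rewrite /b2q /= ?lexx ?ler01 ?ler10. Qed.

Section StepAnalysis.
Variables (P Q : V -> bool) (Y : V -> V -> bool) (Z : bool).
Hypothesis step : tsm_step P Q Y Z.
Local Notation Ps := [set v | P v].
Local Notation Qs := [set v | Q v].

Lemma tsm_step_arcs v : (Q v = P v + \sum_(u | adj u v) Y u v :> nat)%N.
Proof. by case: step => _ [_ [/(_ v) + _]]; rewrite b2q_sum => /b2q_addE. Qed.

Lemma tsm_step_subset : Ps \subset Qs.
Proof.
apply/subsetP => v; rewrite !inE => Pv.
by move: (tsm_step_arcs v); rewrite Pv; case: (Q v) => //; lia.
Qed.

Lemma tsm_step_sub_prop_step : Qs \subset ps Ps.
Proof.
case: step => Y_tail [Y_nbhd _]; apply/subsetP => v; rewrite inE => Qv.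
have [Pv | nPv] := boolP (P v); first by apply: (subsetP (subset_prop_step _ _)); rewrite inE.
have : (\sum_(u | adj u v) Y u v != 0)%N by move: (tsm_step_arcs v); rewrite Qv (negbTE nPv); lia.
rewrite sum_nat_eq0 => /forall_inPn[u uv]; rewrite eqb0 negbK => Yuv.
have {}uv : adj u v by [].
apply: (@prop_step_forced _ _ _ u).
  by have := Y_tail u v uv; rewrite Yuv b2q_le inE.
rewrite forcesE inE uv nPv; apply/subsetP => w w_in.
by have := Y_nbhd u v uv w w_in; rewrite Yuv b2q_le inE.
Qed.

Lemma prop_step_sub_tsm_step : ps Ps \subset Qs.
Proof.
apply/subsetP => v /prop_stepP[/(subsetP tsm_step_subset) // | [u]].
rewrite inE forcesE inE => Pu /and3P[uv nPv nbhd_P].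
have sum_P : \sum_(w in nbhd adj u :\ v) b2q (P w) = #|nbhd adj u :\ v|%:R.
  rewrite sum_b2q_card; congr (_%:R); apply: eq_card => w; rewrite inE.
  by case w_in: (w \in _) => //=; have := subsetP nbhd_P w w_in; rewrite inE.
case: step => _ [_ [_ [/(_ u v uv) + _]]].
rewrite sum_P (cardsD1 v (nbhd adj u)) {2}/nbhd inE uv b2q_sum natrD Pu (negbTE nPv) /b2q /=.
move=> forcing; have : (1 <= \sum_(w | adj w v) Y w v)%N by rewrite -(ler_nat rat); lra.
by move: (tsm_step_arcs v); rewrite inE (negbTE nPv); lia.
Qed.

Lemma tsm_step_prop_step : Qs = ps Ps.
Proof. by apply/eqP; rewrite eqEsubset tsm_step_sub_prop_step prop_step_sub_tsm_step. Qed.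

Lemma tsm_step_active : Z = (Qs != Ps).
Proof.
case: step => _ [_ [_ [_ bounds]]].
move: bounds; rewrite sum_b2q_diff ?tsm_step_subset // indicator_bounds ?max_card // => ->.
by rewrite cards_eq0 setD_eq0 eqEsubset tsm_step_subset andbT.
Qed.

End StepAnalysis.

Section ForcingArcs.
Variable S : {set V}.

Definition forcer (v : V) : option V := [pick u in S | forces adj S u v].

(* The arcs y^t of the propagation step from S: every newly filled vertex gets
   exactly one incoming arc, from a canonically chosen forcer. *)
Definition forcing_arc (u v : V) : bool := (v \notin S) && (forcer v == Some u).

Lemma forcing_arcP u v : forcing_arc u v -> u \in S /\ forces adj S u v.
Proof. by case/andP=> _; rewrite /forcer; case: pickP => // u' /andP[? ?] /eqP[<-]. Qed.

Lemma sum_forcing_arcs v : (\sum_(u | adj u v) forcing_arc u v)%N = (v \in ps S :\: S).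
Proof.
rewrite in_setD; have [vS | nvS] /= := boolP (v \in S).
  by rewrite big1 // => u _; rewrite /forcing_arc vS.
case: (prop_stepP adj S v) => [[vS | [u uS f]] | not_forced].
- by rewrite vS in nvS.
- have [u' arc] : exists u', forcer v = Some u'.
    by rewrite /forcer; case: pickP => [u' _ | /(_ u)]; [exists u' | rewrite uS f].
  have [_ f'] : u' \in S /\ forces adj S u' v.
    by apply: forcing_arcP; rewrite /forcing_arc nvS arc eqxx.
  have u'v : adj u' v by move: f'; rewrite forcesE => /andP[].
  rewrite (bigD1 u') //= /forcing_arc nvS arc eqxx big1 // => w /andP[_ wu'].
  by case: eqP => // -[u'w]; rewrite u'w eqxx in wu'.
- rewrite big1 // => u _; case arc: (forcing_arc u v) => //.
  by case/forcing_arcP: arc => uS f; case: not_forced; right; exists u.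
Qed.

Lemma tsm_step_forcing_arcs :
  tsm_step (fun v => v \in S) (fun v => v \in ps S) forcing_arc (ps S != S).
Proof.
have S_ps := subset_prop_step adj S.
split=> [u v _ | ]; first by rewrite b2q_le; apply/implyP => /forcing_arcP[].
split=> [u v _ w w_in | ].
  rewrite b2q_le; apply/implyP => /forcing_arcP[_].
  by rewrite forcesE => /and3P[_ _ /subsetP]; apply.
split=> [v | ].
  rewrite b2q_sum sum_forcing_arcs; apply/b2q_addE; rewrite in_setD.
  by have := subsetP S_ps v; case: (v \in S); case: (v \in ps S) => // /(_ isT).
split=> [u v uv | ].
  have v_nbhd : v \in nbhd adj u by rewrite inE.
  rewrite sum_b2q_card b2q_sum sum_forcing_arcs (cardsD1 v (nbhd adj u)) v_nbhd.
  apply: forcing_count_le => [|uS nvS card_eq].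
    by apply/subset_leq_card/subsetP => w; rewrite inE => /andP[].
  have /(subset_cardP card_eq) nbhdE :
      [set w | (w \in nbhd adj u :\ v) && (w \in S)] \subset nbhd adj u :\ v.
    by apply/subsetP => w; rewrite inE => /andP[].
  rewrite in_setD nvS (prop_step_forced uS) // forcesE uv nvS.
  by apply/subsetP => w; rewrite -nbhdE inE => /andP[].
rewrite sum_b2q_diff ?set_mem_id // indicator_bounds ?max_card //.
by rewrite cards_eq0 setD_eq0 eqEsubset S_ps andbT.
Qed.

End ForcingArcs.

Section FeasibleSolutions.
Variables (T : nat) (x : nat -> V -> bool) (y : nat -> V -> V -> bool) (z : nat -> bool).
Hypothesis feasible : TSM_feasible adj T x y z.
Local Notation C := [set v | x 0%N v].

Lemma TSM_feasible_iter t : (t <= T)%N -> [set v | x t v] = iter t ps C.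
Proof.
case/TSM_feasibleP: feasible => _ steps; elim: t => [|t IH] le_tT //=.
by rewrite (tsm_step_prop_step (steps t.+1 le_tT)) IH // ltnW.
Qed.

Lemma TSM_feasible_setT : iter T ps C = setT.
Proof.
case/TSM_feasibleP: feasible => allT _.
by rewrite -TSM_feasible_iter //; apply/setP => v; rewrite !inE allT.
Qed.

Lemma TSM_feasible_active : (\sum_(1 <= t < T.+1) z t)%N = active_steps adj T C.
Proof.
case/TSM_feasibleP: feasible => _ steps; apply: eq_big_nat => t /andP[t_gt0 le_tT].
rewrite (tsm_step_active (steps t _)) ?t_gt0 // (TSM_feasible_iter le_tT).
by rewrite (@TSM_feasible_iter t.-1) // (leq_trans (leq_pred t)).
Qed.

Lemma TSM_feasible_pt : pt_is adj C (\sum_(1 <= t < T.+1) z t)%N.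
Proof.
have [m pt_m le_mT] := pt_is_exists TSM_feasible_setT.
by rewrite TSM_feasible_active (active_steps_pt pt_m le_mT).
Qed.

End FeasibleSolutions.

Lemma TSM_feasible_propagation T (S : {set V}) : iter T ps S = setT ->
  TSM_feasible adj T (fun t v => v \in iter t ps S) (fun t => forcing_arc (iter t.-1 ps S))
    (fun t => iter t ps S != iter t.-1 ps S).
Proof.
move=> allT; apply/TSM_feasibleP; split=> [v | [|t] //= _]; first by rewrite allT inE.
exact: tsm_step_forcing_arcs.
Qed.

Lemma TSM_objectiveE T (x : nat -> V -> bool) (z : nat -> bool) : TSM_objective T x z =
  #|[set v | x 0%N v]|%:R - (2 * T%:R)^-1 * (\sum_(1 <= t < T.+1) z t)%N%:R.
Proof. by rewrite /TSM_objective sum_b2q_card b2q_sum. Qed.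

Lemma TSM_optimal_lex T x y z (S : {set V}) m p :
  TSM_optimal adj T x y z -> iter T ps S = setT ->
  pt_is adj [set v | x 0%N v] m -> pt_is adj S p ->
  (#|[set v | x 0%N v]| <= #|S|)%N /\ (#|[set v | x 0%N v]| = #|S| -> p <= m)%N.
Proof.
case=> feasible optimal S_T pt_C pt_S.
have feasible_S := TSM_feasible_propagation S_T.
have pt_S' := TSM_feasible_pt feasible_S; rewrite /= set_mem_id in pt_S'.
apply: (@objective_lex T).
- by rewrite -(pt_is_iter _ pt_C) (TSM_feasible_setT feasible).
- by rewrite -(pt_is_iter _ pt_S) S_T.
move: (optimal _ _ _ feasible_S); rewrite !TSM_objectiveE /= set_mem_id.
by rewrite (pt_is_uniq (TSM_feasible_pt feasible) pt_C) (pt_is_uniq pt_S' pt_S).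
Qed.

End TimeStepModel.

Theorem corollary4p6 (V : finType) (adj : rel V) (x : nat -> V -> bool)
    (y : nat -> V -> V -> bool) (z : nat -> bool) :
  simple_graph adj ->
  TSM_optimal adj (#|V|.-1) x y z ->
  let C := [set v | x 0%N v] in
  min_zero_forcing_set adj C /\
  PT_is adj (\sum_(1 <= t < (#|V|.-1).+1) z t) /\
  pt_is adj C (\sum_(1 <= t < (#|V|.-1).+1) z t).
Proof.
move=> _ optimal C; have pt_C := TSM_feasible_pt optimal.1.
have minC : min_zero_forcing_set adj C.
  split=> [|S /zero_forcing_setP S_T]; first exact/zero_forcing_setP/(TSM_feasible_setT optimal.1).
  by have [p pt_S _] := pt_is_exists S_T; case: (TSM_optimal_lex optimal S_T pt_C pt_S).
do 2!split=> //; split=> [|S [zf_S minS] p pt_S]; first by exists C.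
have /zero_forcing_setP S_T := zf_S.
apply: (TSM_optimal_lex optimal S_T pt_C pt_S).2; apply/eqP.
by rewrite eqn_leq (minC.2 _ zf_S) (minS _ minC.1).
Qed.
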